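(* Let $n,p,r,d$ be positive integers with $d\le\min(p,r)$, let ${\mathbf S}\in\mathbb R^{p\times p}$ be symmetric positive definite, ${\mathbf F}\in\mathbb R^{n\times r}$ of full column rank, ${\mathbf M}\in\mathbb R^{n\times p}$, ${\mathbf S}_{\mathrm{fit}}=n^{-1}{\mathbf M}^T{\mathbf F}({\mathbf F}^T{\mathbf F})^{-1}{\mathbf F}^T{\mathbf M}$, and assume ${\mathbf S}_{\mathrm{res}}={\mathbf S}-{\mathbf S}_{\mathrm{fit}}$ is positive definite. Fix $\alpha\in\mathbb R^{p\times d}$ with $\alpha^T\alpha=I_d$. Over symmetric positive definite $\Delta\in\mathbb R^{p\times p}$, the function $$G(\Delta)=-\tfrac{pn}{2}\log(2\pi)-\tfrac n2\log|\Delta|-\tfrac n2\operatorname{tr}(\Delta^{-1}{\mathbf S})+\tfrac n2\operatorname{tr}\big[(\alpha^T\Delta\alpha)^{-1}\alpha^T{\mathbf S}_{\mathrm{fit}}\alpha\big]$$ attains its maximum at the $\Delta$ given by $$\Delta^{-1}={\mathbf S}^{-1}+\alpha(\alpha^T{\mathbf S}_{\mathrm{res}}\alpha)^{-1}\alpha^T-\alpha(\alpha^T{\mathbf S}\alpha)^{-1}\alpha^T,$$ and the maximal value equals $$-\tfrac{pn}{2}\big[\log(2\pi)+1\big]-\tfrac n2\log|\alpha^T{\mathbf S}_{\mathrm{res}}\alpha|-\tfrac n2\log|{\mathbf S}|+\tfrac n2\log|\alpha^T{\mathbf S}\alpha|.$$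
   Context: $|A|$ denotes the determinant and $\operatorname{tr}$ the trace. $G$ is the function obtained from the EM $Q$-function after maximizing over the parameter $\xi$; ${\mathbf S}$, ${\mathbf M}$, ${\mathbf F}$ are respectively an averaged conditional second-moment matrix, the matrix of conditional means, and the matrix of centered basis functions of the response. *)

From HB Require Import structures.
From Stdlib Require Import Reals Lra.
From Stdlib Require Import Classical ClassicalEpsilon FunctionalExtensionality.
From mathcomp Require Import all_boot all_order all_algebra.

Set Implicit Arguments.
Unset Strict Implicit.
Unset Printing Implicit Defensive.

Definition Req_bool (x y : R) : bool := if Req_EM_T x y then true else false.

Lemma Req_boolP : Equality.axiom Req_bool.
Proof. by move=> x y; rewrite /Req_bool; case: Req_EM_T => h; constructor. Qed.

HB.instance Definition _ := hasDecEq.Build R Req_boolP.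

Definition R_find (P : pred R) (_ : nat) : option R :=
  match excluded_middle_informative (exists x, P x) with
  | left h => Some (proj1_sig (constructive_indefinite_description _ h))
  | right _ => None
  end.

Lemma R_find_correct (P : pred R) n x : R_find P n = Some x -> P x.
Proof.
rewrite /R_find; case: excluded_middle_informative => // h [<-].
exact: proj2_sig (constructive_indefinite_description _ h).
Qed.

Lemma R_find_complete (P : pred R) : (exists x, P x) -> exists n, R_find P n.
Proof.
move=> h; exists 0%N; rewrite /R_find.
by case: excluded_middle_informative.
Qed.

Lemma R_find_ext (P Q : pred R) : P =1 Q -> R_find P =1 R_find Q.
Proof.
move=> hPQ; have -> : P = Q by apply: functional_extensionality.
by [].
Qed.

HB.instance Definition _ :=
  hasChoice.Build R R_find_correct R_find_complete R_find_ext.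

Lemma R_addA : associative Rplus.
Proof. by move=> x y z; rewrite Rplus_assoc. Qed.
Lemma R_addC : commutative Rplus.
Proof. exact: Rplus_comm. Qed.
Lemma R_add0 : left_id R0 Rplus.
Proof. exact: Rplus_0_l. Qed.
Lemma R_addN : left_inverse R0 Ropp Rplus.
Proof. exact: Rplus_opp_l. Qed.

HB.instance Definition _ :=
  GRing.isZmodule.Build R R_addA R_addC R_add0 R_addN.

Lemma R_mulA : associative Rmult.
Proof. by move=> x y z; rewrite Rmult_assoc. Qed.
Lemma R_mulC : commutative Rmult.
Proof. exact: Rmult_comm. Qed.
Lemma R_mul1 : left_id R1 Rmult.
Proof. exact: Rmult_1_l. Qed.
Lemma R_mulDl : left_distributive Rmult Rplus.
Proof. by move=> x y z; rewrite Rmult_plus_distr_r. Qed.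
Lemma R_one_neq0 : R1 != R0.
Proof. by apply/eqP; exact: R1_neq_R0. Qed.

HB.instance Definition _ :=
  GRing.Zmodule_isComNzRing.Build R R_mulA R_mulC R_mul1 R_mulDl R_one_neq0.

Definition R_inv (x : R) : R := if Req_EM_T x R0 then R0 else Rinv x.

Lemma R_mulVf (x : R) : x != R0 -> Rmult (R_inv x) x = R1.
Proof.
move=> /eqP hx; rewrite /R_inv; destruct (Req_EM_T x R0) as [e|ne].
- by case: hx.
- exact: Rinv_l.
Qed.

Lemma R_inv0 : R_inv R0 = R0.
Proof. rewrite /R_inv; destruct (Req_EM_T R0 R0) as [e|ne] => //. Qed.

HB.instance Definition _ := GRing.ComNzRing_isField.Build R R_mulVf R_inv0.

Local Open Scope ring_scope.

Definition sym_pd (p : nat) (A : 'M[R]_p) : Prop :=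
  A^T = A /\
  forall x : 'cV[R]_p, x != 0 -> Rlt R0 ((x^T *m A *m x) ord0 ord0).

Definition Sfit (n p r : nat) (F : 'M[R]_(n, r)) (M : 'M[R]_(n, p)) : 'M[R]_p :=
  (INR n)^-1 *: (M^T *m F *m invmx (F^T *m F) *m F^T *m M).

Definition Sres (n p r : nat) (S : 'M[R]_p) (F : 'M[R]_(n, r))
    (M : 'M[R]_(n, p)) : 'M[R]_p :=
  S - Sfit F M.

Definition Gfun (n p r d : nat) (S : 'M[R]_p) (F : 'M[R]_(n, r))
    (M : 'M[R]_(n, p)) (alpha : 'M[R]_(p, d)) (Delta : 'M[R]_p) : R :=
  (- (INR p * INR n / 2) * ln (2 * PI)
   - INR n / 2 * ln (\det Delta)
   - INR n / 2 * \tr (invmx Delta *m S)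
   + INR n / 2 * \tr (invmx (alpha^T *m Delta *m alpha)
                        *m (alpha^T *m Sfit F M *m alpha)))%R.

From HB Require Import structures.
From Stdlib Require Import Reals Lra.
From mathcomp Require Import all_boot all_order all_algebra ring.
Set Implicit Arguments.
Unset Strict Implicit.
Unset Printing Implicit Defensive.
Import GRing.Theory.
Local Open Scope ring_scope.

(* Up to the constant and the factor n/2, maximizing G means minimizing
   f(D) = ln|D| + tr(D^-1 S) - tr(W^-1 alpha^T S_fit alpha), W = alpha^T D alpha.
   Given D, replace the alpha-block of the precision D^-1 by (alpha^T S alpha)^-1
   (keeping the conditional part D^-1 - alpha W^-1 alpha^T); the resulting
   precision P satisfies ln|P^-1| = ln|D| + ln|alpha^T S alpha| - ln|W| and
   tr(P S) = tr(D^-1 S) - tr(W^-1 alpha^T S alpha) + d.  The Gibbs inequality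
   ln|T| <= ln|W| + tr(W^-1 T) - k for positive definite W, T, applied to
   (P^-1, S) and to (W, alpha^T S_res alpha), then adds up to
   f(D) >= ln|S| + ln|alpha^T S_res alpha| - ln|alpha^T S alpha| + p.
   Equality holds for the same construction applied to S with alpha-block
   (alpha^T S_res alpha)^-1, which is the announced maximizer. *)

(* The ring operations on [R] are Stdlib's ones, which [lra] understands. *)
Lemma addRE (x y : R) : x + y = Rplus x y. Proof. by []. Qed.
Lemma mulRE (x y : R) : x * y = Rmult x y. Proof. by []. Qed.
Lemma oppRE (x : R) : - x = Ropp x. Proof. by []. Qed.
Lemma zeroRE : 0 = R0 :> R. Proof. by []. Qed.
Lemma oneRE : 1 = R1 :> R. Proof. by []. Qed.

Lemma invRE (x : R) : x^-1 = Rinv x.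
Proof.
rewrite /GRing.inv /= /R_inv; case: Req_EM_T => // e /=.
by rewrite [in RHS]e Rinv_0.
Qed.

Lemma natRE k : k%:R = INR k :> R.
Proof. by elim: k => [//|k IH]; rewrite mulrS IH S_INR addRE oneRE; lra. Qed.

Lemma Rlt0_neq0 (x : R) : Rlt R0 x -> x != 0.
Proof. by move=> hx; apply/eqP => e; rewrite e in hx; apply: (Rlt_irrefl _ hx). Qed.

Lemma ln_le_subr1 (a : R) : Rlt R0 a -> Rle (ln a) (Rminus a R1).
Proof.
move=> ha; have h : Rle a (exp (Rminus a R1)) by have := exp_ineq1_le (Rminus a R1); lra.
case: (Rle_lt_or_eq_dec _ _ h) => [lt|e]; last by rewrite {1}e ln_exp; apply: Rle_refl.
by have := ln_increasing _ _ ha lt; rewrite ln_exp; apply: Rlt_le.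
Qed.

Lemma ln_mul_div (x y z : R) : Rlt R0 x -> Rlt R0 y -> Rlt R0 z ->
  ln ((x * y / z)%R) = ln x + ln y - ln z.
Proof.
move=> hx hy hz; rewrite !mulRE invRE ln_mult; last exact: Rinv_0_lt_compat.
  by rewrite ln_mult // ln_Rinv.
exact: Rmult_lt_0_compat.
Qed.

Lemma Rle_sub_mull (c h x y : R) :
  Rle R0 h -> Rle y x -> Rle ((c - h * x)%R) ((c - h * y)%R).
Proof.
move=> hh hxy; have := Rmult_le_compat_l _ _ _ hh hxy.
by rewrite !addRE !oppRE !mulRE; lra.
Qed.

Definition qform k (A : 'M[R]_k) (x : 'cV[R]_k) : R := (x^T *m A *m x) ord0 ord0.

Lemma qform_mulmx k m (A : 'M[R]_k) (B : 'M[R]_(k, m)) x :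
  qform A (B *m x) = qform (B^T *m A *m B) x.
Proof. by rewrite /qform trmx_mul !mulmxA. Qed.

Lemma qformD k (A B : 'M[R]_k) x : qform (A + B) x = qform A x + qform B x.
Proof. by rewrite /qform mulmxDr mulmxDl mxE. Qed.

Lemma qformN k (A : 'M[R]_k) x : qform (- A) x = - qform A x.
Proof. by rewrite /qform mulmxN mulNmx mxE. Qed.

Lemma qform0 k (A : 'M[R]_k) : qform A 0 = 0.
Proof. by rewrite /qform mulmx0 mxE. Qed.

Lemma qform_block_diag k1 k2 (A : 'M[R]_k1) (C : 'M[R]_k2) x y :
  qform (block_mx A 0 0 C) (col_mx x y) = qform A x + qform C y.
Proof.
rewrite /qform tr_col_mx mul_row_block !mulmx0 addr0 add0r.
by rewrite mul_row_col mxE.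
Qed.

Lemma sqnorm_cV_ge0 k (v : 'cV[R]_k) : Rle R0 ((v^T *m v) ord0 ord0).
Proof.
rewrite mxE; apply: (big_ind (fun x => Rle R0 x)).
- exact: Rle_refl.
- by move=> x y hx hy; rewrite addRE; lra.
- by move=> i _; rewrite mxE mulRE; apply: Rle_0_sqr.
Qed.

Lemma sym_pd_qform_ge0 k (A : 'M[R]_k) x : sym_pd A -> Rle R0 (qform A x).
Proof.
move=> [_ hA]; have [->|nz] := eqVneq x 0; first by rewrite qform0; apply: Rle_refl.
exact/Rlt_le/hA.
Qed.

Lemma sym_pd_unit k (A : 'M[R]_k) : sym_pd A -> A \in unitmx.
Proof.
move=> [_ hA]; rewrite unitmxE unitfE; apply/negP => /det0P [v nz vA].
have : v^T != 0 by rewrite -(inj_eq (@trmx_inj _ _ _)) trmxK trmx0.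
by move/hA; rewrite trmxK vA mul0mx mxE => /Rlt_irrefl.
Qed.

Lemma sym_pd_congr k m (A : 'M[R]_k) (B : 'M[R]_(k, m)) :
  sym_pd A -> (forall x : 'cV[R]_m, B *m x = 0 -> x = 0) -> sym_pd (B^T *m A *m B).
Proof.
move=> [hs hA] hB; split; first by rewrite !trmx_mul trmxK hs mulmxA.
move=> x nz; rewrite -/(qform _ _) -qform_mulmx; apply: hA.
by apply/eqP => /hB; apply/eqP.
Qed.

Lemma sym_pd_congr_unit k (A B : 'M[R]_k) :
  sym_pd A -> B \in unitmx -> sym_pd (B^T *m A *m B).
Proof. by move=> hA uB; apply: sym_pd_congr => // x hx; rewrite -(mulKmx uB x) hx mulmx0. Qed.

Lemma sym_pd_inv k (A : 'M[R]_k) : sym_pd A -> sym_pd (invmx A).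
Proof.
move=> hA; have uA := sym_pd_unit hA.
have sI : (invmx A)^T = invmx A by rewrite trmx_inv hA.1.
have -> : invmx A = (invmx A)^T *m A *m invmx A by rewrite sI mulVmx ?mul1mx.
by apply: sym_pd_congr_unit; rewrite ?unitmx_inv.
Qed.

Lemma mulmx1_invmx k (A B : 'M[R]_k) : A *m B = 1%:M -> invmx A = B.
Proof.
move=> AB; have [uA _] := mulmx1_unit AB.
by rewrite -[invmx A]mulmx1 -AB mulmxA mulVmx // mul1mx.
Qed.

Lemma invmxM k (A B : 'M[R]_k) : A \in unitmx -> B \in unitmx ->
  invmx (A *m B) = invmx B *m invmx A.
Proof.
move=> uA uB; apply: mulmx1_invmx.
by rewrite mulmxA -(mulmxA A) mulmxV // mulmx1 mulmxV.
Qed.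

Lemma sym_pd_schur k (M : 'M[R]_(1 + k)) : sym_pd M ->
  exists (a : R) (v : 'cV[R]_k) (M1 : 'M[R]_k),
   [/\ M = block_mx a%:M v^T v M1, Rlt R0 a,
   sym_pd (M1 - a^-1 *: (v *m v^T)) &
   \det M = a * \det (M1 - a^-1 *: (v *m v^T))].
Proof.
move=> hM; have [hs hpos] := hM.
set a := ulsubmx M ord0 ord0; set v := dlsubmx M; set M1 := drsubmx M.
have eM : M = block_mx a%:M v^T v M1.
  by rewrite -{1}(submxK M) /a -mx11_scalar /v trmx_dlsub hs.
have ha : Rlt R0 a.
  have nz1 : col_mx (1%:M : 'M[R]_1) (0 : 'cV[R]_k) != 0.
    by rewrite col_mx_eq0 negb_and oner_eq0.
  have := hpos _ nz1; rewrite -/(qform _ _) eM.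
  rewrite /qform tr_col_mx trmx1 trmx0 mul_row_block !mul0mx !mul1mx !addr0.
  by rewrite mul_row_col mulmx1 mulmx0 addr0 mxE eqxx mulr1n.
have a0 := Rlt0_neq0 ha.
set S1 := M1 - a^-1 *: (v *m v^T).
(* row and column operations clearing [v] off the first column and row *)
set L : 'M[R]_(1 + k) := block_mx 1%:M 0 (- (a^-1 *: v)) 1%:M.
have eD : L *m M *m L^T = block_mx a%:M 0 0 S1.
  rewrite eM /L tr_block_mx !trmx1 trmx0 !mulmx_block.
  rewrite !mul1mx !mul0mx !mulmx0 !mulmx1 !addr0.
  have e1 : - (a^-1 *: v) *m a%:M + v = 0.
    by rewrite mul_mx_scalar scalerN scalerA mulfV // scale1r addNr.
  have e2 : a%:M *m (- (a^-1 *: v))^T + v^T = 0.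
    by rewrite mul_scalar_mx linearN linearZ /= scalerN scalerA mulfV // scale1r addNr.
  by rewrite e1 e2 mul0mx add0r /S1 addrC mulNmx scalemxAl.
have detL : \det L = 1 by rewrite det_lblock !det1 mulr1.
have hD : sym_pd (L *m M *m L^T).
  rewrite -{1}(trmxK L); apply: sym_pd_congr_unit => //.
  by rewrite unitmx_tr unitmxE detL unitr1.
rewrite eD in hD.
exists a, v, M1; split => //.
  split; first by rewrite /S1 linearB linearZ /= trmx_mul trmxK /M1 trmx_drsub hs.
  move=> y nzy.
  have nz : col_mx (0 : 'M[R]_1) y != 0 by rewrite col_mx_eq0 negb_and nzy orbT.
  by have := hD.2 _ nz; rewrite -/(qform _ _) qform_block_diag qform0 add0r.
have := congr1 determinant eD.
by rewrite !det_mulmx det_tr det_ublock det_scalar1 detL mul1r mulr1.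
Qed.

Lemma sym_pd_det_gt0_ln_det_le k (M : 'M[R]_k) : sym_pd M ->
  Rlt R0 (\det M) /\ Rle (ln (\det M)) (\tr M - INR k).
Proof.
elim: k M => [|k IH] M hM.
  rewrite det_mx00 /mxtrace big_ord0 ln_1 /=; split; first exact: Rlt_0_1.
  by rewrite zeroRE; lra.
have [a [v [M1 [eM ha hS hdet]]]] := @sym_pd_schur k M hM.
have [hd1 hl1] := IH _ hS.
set S1 := M1 - a^-1 *: (v *m v^T) in hS hdet hd1 hl1.
have htr : \tr (M : 'M_(1 + k)) = a + (\tr S1 + a^-1 * (v^T *m v) ord0 ord0).
  rewrite eM mxtrace_block mxtrace_scalar /S1 raddfB /= mxtraceZ.
  by rewrite mxtrace_mulC trace_mx11 subrK.
have hpos : Rle R0 ((a^-1 * (v^T *m v) ord0 ord0)%R).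
  rewrite mulRE invRE; apply: Rmult_le_pos; last exact: sqnorm_cV_ge0.
  exact/Rlt_le/Rinv_0_lt_compat.
rewrite hdet mulRE; split; first exact: Rmult_lt_0_compat.
move: hl1 hpos; rewrite ln_mult // htr S_INR !addRE.
by have := ln_le_subr1 ha; lra.
Qed.

Lemma sym_pd_det_gt0 k (A : 'M[R]_k) : sym_pd A -> Rlt R0 (\det A).
Proof. by case/sym_pd_det_gt0_ln_det_le. Qed.

Lemma ln_det_invmx k (A : 'M[R]_k) : sym_pd A -> ln (\det (invmx A)) = - ln (\det A).
Proof. by move/sym_pd_det_gt0=> hA; rewrite det_inv invRE ln_Rinv. Qed.

Lemma sym_pd_cholesky k (W : 'M[R]_k) : sym_pd W -> exists C : 'M[R]_k, W = C *m C^T.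
Proof.
elim: k W => [|k IH]; first by exists 0; apply/matrixP => i [].
suff cholesky1 (W : 'M[R]_(1 + k)) : sym_pd W -> exists C : 'M_(1 + k), W = C *m C^T.
  exact: cholesky1.
move=> /sym_pd_schur [a [v [M1 [-> ha hS _]]]].
have [C1 eC1] := IH _ hS.
have hs : Rlt R0 (sqrt a) by apply: sqrt_lt_R0.
have s0 := Rlt0_neq0 hs.
have ss : sqrt a * sqrt a = a by rewrite mulRE sqrt_sqrt //; apply: Rlt_le.
exists (block_mx (sqrt a)%:M 0 ((sqrt a)^-1 *: v) C1 : 'M_(1 + k)).
rewrite tr_block_mx trmx0 tr_scalar_mx mulmx_block.
rewrite !mulmx0 !mul0mx !addr0 -eC1 -scalar_mxM ss.
rewrite mul_scalar_mx mul_mx_scalar linearZ /= !scalerA mulfV // !scale1r.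
by rewrite -scalemxAl -scalemxAr scalerA -invfM ss addrC subrK.
Qed.

Lemma ln_det_le_tr_invmx k (W T : 'M[R]_k) : sym_pd W -> sym_pd T ->
  Rle (ln (\det T)) (ln (\det W) + \tr (invmx W *m T) - INR k).
Proof.
move=> hW hT; have [C eC] := sym_pd_cholesky hW.
have [uC uCt] : C \in unitmx /\ C^T \in unitmx.
  by apply/andP; rewrite -unitmx_mul -eC sym_pd_unit.
set B := (invmx C)^T.
have hM : sym_pd (B^T *m T *m B).
  by apply: sym_pd_congr_unit; rewrite // unitmx_tr unitmx_inv.
have [hdM hlM] := sym_pd_det_gt0_ln_det_le hM.
have edet : \det T = \det (B^T *m T *m B) * \det W.
  rewrite !det_mulmx eC det_mulmx /B trmxK !det_tr det_inv.
  have c0 : \det C != 0 by rewrite -unitfE -unitmxE.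
  by field.
have etr : \tr (B^T *m T *m B) = \tr (invmx W *m T).
  by rewrite mxtrace_mulC mulmxA eC invmxM // /B trmxK trmx_inv.
have hdW := sym_pd_det_gt0 hW.
move: hlM; rewrite edet mulRE ln_mult // etr.
(* the occurrences of these atoms agree only up to conversion, which [lra] misses *)
by set t := \tr _; set l := ln (\det (B^T *m _ *m _)); lra.
Qed.

Lemma sylvester_det m n (U : 'M[R]_(m, n)) (V : 'M[R]_(n, m)) :
  \det (1%:M + U *m V) = \det (1%:M + V *m U).
Proof.
have e1 : block_mx 1%:M 0 V 1%:M *m block_mx 1%:M (-U) 0 (1%:M + V *m U)
          = block_mx 1%:M (-U) V 1%:M :> 'M[R]_(m + n).
  rewrite mulmx_block ?mul1mx ?mul0mx ?mulmx0 ?addr0 ?mulmx1 ?add0r.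
  by rewrite mulmxN addrCA addNr addr0.
have e2 : block_mx (1%:M + U *m V) (-U) 0 1%:M *m block_mx 1%:M 0 V 1%:M
          = block_mx 1%:M (-U) V 1%:M :> 'M[R]_(m + n).
  rewrite mulmx_block ?mul1mx ?mul0mx ?mulmx0 ?addr0 ?mulmx1 ?add0r.
  by rewrite mulNmx addrK.
have := congr1 determinant e1; rewrite -e2 !det_mulmx.
by rewrite (@det_lblock _ m n) !(@det_ublock _ m n) !det1 !mul1r !mulr1 => ->.
Qed.

Section PrecisionWithMarginal.

Variables (p d : nat) (al : 'M[R]_(p, d)).
Hypothesis al_orth : al^T *m al = 1%:M.

Lemma orthonormal_inj (x : 'cV[R]_d) : al *m x = 0 -> x = 0.
Proof. by move=> hx; rewrite -(mul1mx x) -al_orth -mulmxA hx mulmx0. Qed.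

Lemma sym_pd_compress (D : 'M[R]_p) : sym_pd D -> sym_pd (al^T *m D *m al).
Proof. by move=> hD; apply: sym_pd_congr => //; apply: orthonormal_inj. Qed.

(* For a Gaussian covariance D, [cond_prec D] is the part of the precision
   [invmx D] carried by the conditional law given [al^T x]; [prec_marginal D Y]
   keeps it and gives [al^T x] the covariance [invmx Y]. *)
Definition cond_prec (D : 'M[R]_p) : 'M[R]_p :=
  invmx D - al *m invmx (al^T *m D *m al) *m al^T.

Definition prec_marginal (D : 'M[R]_p) (Y : 'M[R]_d) : 'M[R]_p :=
  cond_prec D + al *m Y *m al^T.

Lemma cond_prec_sym (D : 'M[R]_p) : sym_pd D -> (cond_prec D)^T = cond_prec D.
Proof.
move=> hD; have [s1 _] := sym_pd_inv hD; have [s2 _] := sym_pd_inv (sym_pd_compress hD).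
by rewrite /cond_prec linearB /= s1 !trmx_mul trmxK s2 mulmxA.
Qed.

Lemma cond_prec_sandwich (D : 'M[R]_p) : sym_pd D ->
  cond_prec D *m D *m cond_prec D = cond_prec D.
Proof.
move=> hD; have uD := sym_pd_unit hD; have uW := sym_pd_unit (sym_pd_compress hD).
set W := al^T *m D *m al in uW *.
have eal : al *m invmx W *m al^T *m D *m al = al.
  by rewrite -[RHS](mulmxKV uW) /W !mulmxA.
rewrite /cond_prec -/W !mulmxBl mulVmx // mul1mx mulmxBr mulmxK //.
by rewrite !mulmxA eal subrr subr0.
Qed.

Lemma prec_marginal_pd (D : 'M[R]_p) (Y : 'M[R]_d) :
  sym_pd D -> sym_pd Y -> sym_pd (prec_marginal D Y).
Proof.
move=> hD hY; split.
  by rewrite /prec_marginal linearD /= cond_prec_sym // !trmx_mul trmxK hY.1 mulmxA.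
move=> x nz; rewrite -/(qform _ _).
have qal (Z : 'M[R]_d) : qform (al *m Z *m al^T) x = qform Z (al^T *m x).
  by rewrite qform_mulmx trmxK.
rewrite /prec_marginal qformD qal.
have [h|h] := eqVneq (al^T *m x) 0.
  rewrite h qform0 addr0 /cond_prec qformD qformN qal h qform0 oppr0 addr0.
  exact: (sym_pd_inv hD).2.
have hcond : Rle R0 (qform (cond_prec D) x).
  rewrite -cond_prec_sandwich // -{1}cond_prec_sym // -qform_mulmx.
  exact: sym_pd_qform_ge0.
by have := hY.2 _ h; rewrite -/(qform _ _) addRE; lra.
Qed.

Lemma marginal_prec_marginal (D : 'M[R]_p) (Y : 'M[R]_d) : sym_pd D -> sym_pd Y ->
  al^T *m invmx (prec_marginal D Y) *m al = invmx Y.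
Proof.
move=> hD hY; have uD := sym_pd_unit hD; have uW := sym_pd_unit (sym_pd_compress hD).
have uP := sym_pd_unit (prec_marginal_pd hD hY).
set W := al^T *m D *m al in uW *.
have ePD : prec_marginal D Y *m (D *m al) = al *m (Y *m W).
  rewrite /prec_marginal /cond_prec -/W !mulmxDl mulNmx !mulmxA mulVmx // mul1mx.
  have h (X : 'M[R]_(p, d)) : X *m al^T *m D *m al = X *m W by rewrite /W !mulmxA.
  by rewrite !h mulmxKV // addrN add0r mulmxA.
have eDal : invmx (prec_marginal D Y) *m al *m (Y *m W) = D *m al.
  by rewrite -mulmxA -ePD mulKmx.
have eYW : al^T *m invmx (prec_marginal D Y) *m al *m Y *m W = W.
  transitivity (al^T *m (invmx (prec_marginal D Y) *m al *m (Y *m W))).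
    by rewrite !mulmxA.
  by rewrite eDal /W mulmxA.
have e1 : al^T *m invmx (prec_marginal D Y) *m al *m Y = 1%:M.
  by rewrite -[LHS]mulmx1 -(mulmxV uW) mulmxA eYW mulmxV.
by apply/esym/mulmx1_invmx/mulmx1C.
Qed.

Lemma det_prec_marginal (D : 'M[R]_p) (Y : 'M[R]_d) : sym_pd D ->
  \det (prec_marginal D Y) = \det (al^T *m D *m al) * \det Y / \det D.
Proof.
move=> hD; have uD := sym_pd_unit hD; have uW := sym_pd_unit (sym_pd_compress hD).
set W := al^T *m D *m al in uW *.
have e1 : invmx D *m (1%:M + (D *m al *m (Y - invmx W)) *m al^T) = prec_marginal D Y.
  rewrite mulmxDr mulmx1 !mulmxA mulVmx // mul1mx mulmxBr mulmxBl.
  by rewrite /prec_marginal /cond_prec -/W addrA addrAC.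
have e2 : 1%:M + al^T *m (D *m al *m (Y - invmx W)) = W *m Y.
  by rewrite !mulmxA -/W mulmxBr mulmxV // addrCA subrr addr0.
by rewrite -e1 det_mulmx sylvester_det e2 det_mulmx det_inv mulrC.
Qed.

Lemma ln_det_inv_prec_marginal (D : 'M[R]_p) (Y : 'M[R]_d) : sym_pd D -> sym_pd Y ->
  ln (\det (invmx (prec_marginal D Y)))
  = ln (\det D) - ln (\det (al^T *m D *m al)) - ln (\det Y).
Proof.
move=> hD hY; have hW := sym_pd_compress hD.
rewrite (ln_det_invmx (prec_marginal_pd hD hY)) det_prec_marginal //.
rewrite ln_mul_div; try exact: sym_pd_det_gt0.
by rewrite !addRE !oppRE; lra.
Qed.

Lemma tr_prec_marginal_mul (D : 'M[R]_p) (Y : 'M[R]_d) (S : 'M[R]_p) :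
  \tr (prec_marginal D Y *m S) = \tr (invmx D *m S)
     - \tr (invmx (al^T *m D *m al) *m (al^T *m S *m al))
     + \tr (Y *m (al^T *m S *m al)).
Proof.
rewrite /prec_marginal /cond_prec !mulmxDl mulNmx !mxtraceD raddfN /=.
by rewrite -!mulmxA !(mxtrace_mulC al) !mulmxA.
Qed.

End PrecisionWithMarginal.

Definition deviance p d (S B : 'M[R]_p) (al : 'M[R]_(p, d)) (D : 'M[R]_p) : R :=
  (ln (\det D) + \tr (invmx D *m S)
   - \tr (invmx (al^T *m D *m al) *m (al^T *m B *m al)))%R.

Lemma Gfun_deviance n p r d (S : 'M[R]_p) (F : 'M[R]_(n, r)) (M : 'M[R]_(n, p))
  (al : 'M[R]_(p, d)) (D : 'M[R]_p) :
  Gfun S F M al D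
  = - (INR p * INR n / 2) * ln (2 * PI) - INR n / 2 * deviance S (Sfit F M) al D.
Proof. by rewrite /Gfun /deviance; ring. Qed.

Section DevianceBound.

Variables (p d : nat) (S B : 'M[R]_p) (al : 'M[R]_(p, d)).
Hypotheses (al_orth : al^T *m al = 1%:M) (hS : sym_pd S) (hSB : sym_pd (S - B)).

Let A := al^T *m S *m al.
Let Ar := al^T *m (S - B) *m al.

Lemma compress_sub : al^T *m B *m al = A - Ar.
Proof. by rewrite /A /Ar mulmxBr mulmxBl opprB addrC subrK. Qed.

Lemma deviance_ge (D : 'M[R]_p) : sym_pd D ->
  Rle (ln (\det S) + ln (\det Ar) - ln (\det A) + INR p) (deviance S B al D).
Proof.
move=> hD; have hA : sym_pd A := sym_pd_compress al_orth hS.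
have hW := sym_pd_compress al_orth hD.
set W := al^T *m D *m al in hW *.
have hP := prec_marginal_pd al_orth hD (sym_pd_inv hA).
have ldet := ln_det_inv_prec_marginal al_orth hD (sym_pd_inv hA).
rewrite (ln_det_invmx hA) in ldet.
have gibbs_p : Rle (ln (\det S)) (ln (\det D) - ln (\det W) + ln (\det A)
                  + (\tr (invmx D *m S) - \tr (invmx W *m A) + INR d) - INR p).
  have := ln_det_le_tr_invmx (sym_pd_inv hP) hS.
  rewrite invmxK ldet tr_prec_marginal_mul mulVmx ?sym_pd_unit // mxtrace1 natRE.
  by rewrite opprK.
have gibbs_d : Rle (ln (\det Ar)) (ln (\det W) + \tr (invmx W *m Ar) - INR d).
  exact/ln_det_le_tr_invmx/sym_pd_compress.
rewrite /deviance -/W compress_sub mulmxBr raddfB /=.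
move: gibbs_p gibbs_d; rewrite !addRE !oppRE.
set t1 := \tr (invmx W *m A); set t2 := \tr (invmx W *m Ar); set t3 := \tr (invmx D *m S).
lra.
Qed.

Definition opt_prec : 'M[R]_p := prec_marginal al S (invmx Ar).

Lemma opt_prec_pd : sym_pd opt_prec.
Proof. exact/prec_marginal_pd/sym_pd_inv/sym_pd_compress. Qed.

Lemma deviance_opt :
  deviance S B al (invmx opt_prec) = ln (\det S) + ln (\det Ar) - ln (\det A) + INR p.
Proof.
have hA : sym_pd A := sym_pd_compress al_orth hS.
have hAr : sym_pd Ar := sym_pd_compress al_orth hSB.
have uA := sym_pd_unit hA; have uAr := sym_pd_unit hAr.
rewrite /deviance /opt_prec invmxK.
rewrite (ln_det_inv_prec_marginal al_orth hS (sym_pd_inv hAr)) (ln_det_invmx hAr).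
rewrite (marginal_prec_marginal al_orth hS (sym_pd_inv hAr)) invmxK.
rewrite tr_prec_marginal_mul mulVmx ?sym_pd_unit // (mulVmx uA) compress_sub.
by rewrite mulmxBr (mulVmx uAr) raddfB /= !mxtrace1 !natRE; ring.
Qed.

End DevianceBound.

Theorem mainTheorem2 (n p r d : nat)
  (hn : (0 < n)%N) (hp : (0 < p)%N) (hr : (0 < r)%N) (hd : (0 < d)%N)
  (hdpr : (d <= minn p r)%N)
  (S : 'M[R]_p) (F : 'M[R]_(n, r)) (M : 'M[R]_(n, p)) (alpha : 'M[R]_(p, d))
  (hS : sym_pd S)
  (hF : \rank F = r)
  (hSres : sym_pd (Sres S F M))
  (halpha : alpha^T *m alpha = 1%:M) :
  exists Delta0 : 'M[R]_p,
    sym_pd Delta0 /\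
    invmx Delta0 = invmx S
                   + alpha *m invmx (alpha^T *m Sres S F M *m alpha) *m alpha^T
                   - alpha *m invmx (alpha^T *m S *m alpha) *m alpha^T /\
    (forall Delta : 'M[R]_p, sym_pd Delta ->
       Rle (Gfun S F M alpha Delta) (Gfun S F M alpha Delta0)) /\
    Gfun S F M alpha Delta0 =
      (- (INR p * INR n / 2) * (ln (2 * PI) + 1)
       - INR n / 2 * ln (\det (alpha^T *m Sres S F M *m alpha))
       - INR n / 2 * ln (\det S)
       + INR n / 2 * ln (\det (alpha^T *m S *m alpha)))%R.
Proof.
have hopt := opt_prec_pd halpha hS hSres.
exists (invmx (opt_prec S (Sfit F M) alpha)); split; first exact: sym_pd_inv.
split; first by rewrite invmxK /opt_prec /prec_marginal /cond_prec addrAC.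
have half_ge0 : Rle R0 ((INR n / 2)%R).
  rewrite mulRE invRE; apply: Rmult_le_pos; first exact: pos_INR.
  by apply/Rlt_le/Rinv_0_lt_compat; rewrite (natRE 2) /=; lra.
split=> [Delta hDelta|]; rewrite !Gfun_deviance deviance_opt //.
  exact/Rle_sub_mull/deviance_ge.
by ring.
Qed.
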